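(* Let $A$ be a T-brace and suppose that the torsion subgroup of the additive group of $\zeta(\star,A)$ is a $p$-group for some prime $p$. Suppose that the additive group of $\zeta_2(\star,A)$ is not periodic. If $a,b\in\zeta_2(\star,A)$ with $a\star a\neq 0$ and $b\star b\neq 0$, then $\langle a\star a\rangle\cap\langle b\star b\rangle\neq 0$, and in this case $\langle a\star a\rangle=\langle b\star b\rangle$. Here $\langle x\rangle$ denotes the cyclic subgroup of $(A,+)$ generated by $x$.
   Context: A (left) brace is a set $A$ with two operations $+$ and $\cdot$ such that $(A,+)$ is an abelian group, $(A,\cdot)$ is a group, and $a(b+c)=ab+ac-a$ for all $a,b,c\in A$. Put $a\star b=ab-a-b$. A subbrace is a subset which is a subgroup of both $(A,+)$ and $(A,\cdot)$; a subbrace $L$ is an ideal if $a\star z, z\star a\in L$ for all $a\in A$, $z\in L$, and then the quotient brace $A/L$ is defined. $A$ is a T-brace if whenever $I$ is an ideal of $J$ and $J$ is an ideal of $A$, then $I$ is an ideal of $A$. The $\star$-center is $\zeta(\star,A)=\{a: a\star x=x\star a=0\ \forall x\}$; $\zeta_2(\star,A)$ is given by $\zeta_2(\star,A)/\zeta(\star,A)=\zeta(\star,A/\zeta(\star,A))$. *)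

From mathcomp Require Import all_boot all_order all_algebra.
Set Implicit Arguments. Unset Strict Implicit. Unset Printing Implicit Defensive.
Import GRing.Theory.
Local Open Scope ring_scope.

Definition is_brace (A : zmodType) (mul : A -> A -> A) (one : A)
    (inv : A -> A) : Prop :=
  [/\ associative mul, left_id one mul, right_id one mul,
      (forall a, mul (inv a) a = one /\ mul a (inv a) = one)
    & (forall a b c, mul a (b + c) = mul a b + mul a c - a)].

Definition bstar (A : zmodType) (mul : A -> A -> A) (a b : A) : A :=
  mul a b - a - b.

Definition subbrace (A : zmodType) (mul : A -> A -> A) (one : A)
    (inv : A -> A) (L : A -> Prop) : Prop :=
  [/\ L 0, (forall x y, L x -> L y -> L (x - y)),
      L one, (forall x y, L x -> L y -> L (mul x y))
    & (forall x, L x -> L (inv x))].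

Definition ideal_of (A : zmodType) (mul : A -> A -> A) (one : A)
    (inv : A -> A) (J I : A -> Prop) : Prop :=
  [/\ subbrace mul one inv I, (forall x, I x -> J x)
    & (forall a z, J a -> I z -> I (bstar mul a z) /\ I (bstar mul z a))].

Definition ideal (A : zmodType) (mul : A -> A -> A) (one : A)
    (inv : A -> A) (I : A -> Prop) : Prop :=
  ideal_of mul one inv (fun _ => True) I.

Definition T_brace (A : zmodType) (mul : A -> A -> A) (one : A)
    (inv : A -> A) : Prop :=
  forall I J : A -> Prop,
    subbrace mul one inv J ->
    ideal_of mul one inv J I -> ideal mul one inv J -> ideal mul one inv I.

Definition star_center (A : zmodType) (mul : A -> A -> A) (a : A) : Prop :=
  forall x, bstar mul a x = 0 /\ bstar mul x a = 0.

(* zeta_2(star, A): preimage of zeta(star, A/zeta(star,A)); since the star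
   operation of the quotient is induced, this is the set of a with
   a * x, x * a in zeta(star,A) for all x. *)
Definition star_center2 (A : zmodType) (mul : A -> A -> A) (a : A) : Prop :=
  forall x, star_center mul (bstar mul a x) /\ star_center mul (bstar mul x a).

Definition cyc (A : zmodType) (x : A) (y : A) : Prop :=
  exists k : int, y = x *~ k.

Definition add_torsion (A : zmodType) (x : A) : Prop :=
  exists n : nat, (0 < n)%N /\ x *+ n = 0.

From mathcomp Require Import all_boot all_algebra.
From Stdlib Require Import Classical.
Set Implicit Arguments. Unset Strict Implicit. Unset Printing Implicit Defensive.
Import GRing.Theory.
Local Open Scope ring_scope.

(* For [c] in zeta_2, the T-brace property applied to the ideal [<c> + <c * c>]
   of the ideal [<c> + zeta(star, A)] puts every [x * c] and [c * x] into
   [<c> + <c * c>].  A non-periodic element of zeta_2 allows one to get rid of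
   the [<c>]-component, so all star products with [c] lie in [<c * c>]; for
   [c *~ p] this forces [p (c * c) = 0].  Comparing [a * b], [b * a]
   and [(a + b) * (a + b)] then shows that nonzero squares generate the same
   cyclic group. *)

(** * Integer multiples and cyclic subgroups *)

Section IntMultiples.
Variable A : zmodType.
Implicit Types (x y z c e q s : A) (k n : int).

Lemma mulrz_closed (P : A -> Prop) :
  P 0 -> (forall x y, P x -> P y -> P (x - y)) -> forall x k, P x -> P (x *~ k).
Proof.
move=> P0 PB; have PN x : P x -> P (- x) by move=> Px; rewrite -sub0r; apply: PB.
have PMn x m : P x -> P (x *+ m).
  move=> Px; elim: m => [|m IHm]; first by rewrite mulr0n.
  by rewrite mulrS -[x *+ m]opprK; apply/PB/PN.
by move=> x [m|m] Px; rewrite ?NegzE ?mulrNz -pmulrn; [apply: PMn | apply/PN/PMn].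
Qed.

Lemma mulrz_morph_in (B : zmodType) (P : A -> Prop) (f : A -> B) :
  P 0 -> (forall x y, P x -> P y -> P (x - y)) ->
  (forall x y, P x -> P y -> f (x - y) = f x - f y) ->
  forall x k, P x -> f (x *~ k) = f x *~ k.
Proof.
move=> P0 PB fB; have PN x : P x -> P (- x) by move=> Px; rewrite -sub0r; apply: PB.
have f0 : f 0 = 0 by rewrite -(subrr 0) fB // subrr.
have fN x : P x -> f (- x) = - f x by move=> Px; rewrite -sub0r fB // f0 sub0r.
have fMn x m : P x -> f (x *+ m) = f x *+ m.
  move=> Px; elim: m => [|m IHm]; first by rewrite !mulr0n.
  have Pm : P (x *+ m) by rewrite pmulrn; apply: mulrz_closed.
  by rewrite !mulrS -[x *+ m]opprK fB ?fN ?opprK ?IHm //; apply: PN.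
by move=> x [m|m] Px; rewrite ?NegzE ?mulrNz -!pmulrn ?fN ?fMn //;
  rewrite pmulrn; apply: mulrz_closed.
Qed.

Lemma mulrz_eq0_add_torsion x k : x *~ k = 0 -> k != 0 -> add_torsion x.
Proof.
move=> xk0 k_neq0; exists `|k|%N; rewrite absz_gt0; split=> //.
case: k xk0 {k_neq0} => m /=; first by rewrite pmulrn.
by rewrite NegzE mulrNz -pmulrn => /eqP; rewrite oppr_eq0 => /eqP.
Qed.

Lemma nontorsion_mulrz_eq0 x k : ~ add_torsion x -> (x *~ k == 0) = (k == 0).
Proof.
move=> x_nt; apply/eqP/eqP => [xk0|->]; last by rewrite mulr0z.
by apply/eqP/negP => /negP /(mulrz_eq0_add_torsion xk0).
Qed.

Lemma nontorsion_mulrz x k : ~ add_torsion x -> k != 0 -> ~ add_torsion (x *~ k).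
Proof.
move=> x_nt k_neq0 [m [m_gt0 xkm0]]; apply: x_nt.
apply: (@mulrz_eq0_add_torsion _ (k * m%:Z)); first by rewrite mulrzA -pmulrn.
by rewrite mulf_neq0 // eqz_nat -lt0n.
Qed.

Lemma cyc_refl x : cyc x x.
Proof. by exists 1; rewrite mulr1z. Qed.

Lemma cyc_trans x y z : cyc x y -> cyc y z -> cyc x z.
Proof. by move=> [k ->] [j ->]; exists (k * j); rewrite mulrzA. Qed.

Lemma cyc_mulrz x y k : cyc x y -> cyc x (y *~ k).
Proof. by move=> [j ->]; exists (j * k); rewrite mulrzA. Qed.

Lemma cycB x y z : cyc x y -> cyc x z -> cyc x (y - z).
Proof. by move=> [k ->] [j ->]; exists (k - j); rewrite mulrzBr. Qed.

Definition cyc_plus c (W : A -> Prop) y := exists k w, W w /\ y = c *~ k + w.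

Lemma cyc_plus_id c (W : A -> Prop) w : W w -> cyc_plus c W w.
Proof. by exists 0, w; rewrite mulr0z add0r. Qed.

Lemma cyc_plusS c (W W' : A -> Prop) y :
  (forall w, W w -> W' w) -> cyc_plus c W y -> cyc_plus c W' y.
Proof. by move=> sWW' [k [w [Ww ->]]]; exists k, w; split=> //; apply: sWW'. Qed.

(* Multiplying by [n] kills the [<c + e>]- and [<c + 2 e>]-components of [s],
   whose difference is a multiple of [e]. *)
Lemma cyc_plus_shift_nontorsion c e q s n :
  ~ add_torsion e -> n != 0 -> s *~ n = 0 -> q *~ n = 0 ->
  cyc_plus (c + e) (cyc q) s -> cyc_plus (c + e *~ 2) (cyc q) s -> cyc q s.
Proof.
move=> e_nt n_neq0 sn0 qn0 [k1 [_ [[m1 ->] Es1]]] [k2 [_ [[m2 ->] Es2]]].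
have ann y k m : s = y *~ k + q *~ m -> y *~ k *~ n = 0.
  by move=> Es; rewrite -[y *~ k](addrK (q *~ m)) -Es mulrzBl sn0
    -mulrzA mulrC mulrzA qn0 mul0rz subrr.
have [k1_0|k1_neq0] := eqVneq k1 0; first by exists m1; rewrite Es1 k1_0 mulr0z add0r.
have [k2_0|k2_neq0] := eqVneq k2 0; first by exists m2; rewrite Es2 k2_0 mulr0z add0r.
suff : e *~ (k1 * n * (k2 * n)) = 0.
  by move/eqP; rewrite nontorsion_mulrz_eq0 // !mulf_eq0 (negbTE k1_neq0)
    (negbTE k2_neq0) (negbTE n_neq0).
have -> : e = (c + e *~ 2) - (c + e).
  by rewrite opprD addrACA subrr add0r -pmulrn mulr2n addrK.
rewrite mulrzBl [in X in X - _](mulrC (k1 * n)) !mulrzA.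
by rewrite (ann _ _ _ Es2) (ann _ _ _ Es1) !mul0rz subrr.
Qed.

Section PrimeExponent.
Variable p : nat.
Hypothesis p_prime : prime p.

Lemma cyc_mulrz_prime_exponent x k : x *+ p = 0 -> x *~ k = 0 \/ cyc (x *~ k) x.
Proof.
move=> xp0; case cop: (coprime p `|k|).
  right; have [u [v uv]] := Bezoutz k p; exists u.
  rewrite -mulrzA mulrC -[x in LHS]mulr1z.
  have -> : 1 = u * k + v * p by rewrite uv /gcdz gcdnC (eqP cop).
  by rewrite mulrzDr [v * _]mulrC (mulrzA x p) -pmulrn xp0 mul0rz addr0.
left; move: cop; rewrite prime_coprime // => /negbFE/dvdnP [t kE].
have xk0 : x *+ `|k|%N = 0 by rewrite kE mulnC mulrnA xp0 mul0rn.
by case: k xk0 {kE} => m /= xm0; rewrite ?NegzE ?mulrNz -pmulrn xm0 ?oppr0.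
Qed.

Lemma cyc_prime_exponent q r x :
  r *+ p = 0 -> cyc q x -> cyc r x -> x <> 0 -> cyc q r.
Proof.
move=> rp0 qx [k xE] x_neq0; rewrite xE in qx x_neq0.
by case: (cyc_mulrz_prime_exponent k rp0) => // /(cyc_trans qx).
Qed.

Lemma cyc_prime_exponent_mulrz q y : q *+ p = 0 -> cyc q y -> y *~ p = 0.
Proof. by move=> qp0 [k ->]; rewrite -mulrzA mulrC mulrzA -pmulrn qp0 mul0rz. Qed.

End PrimeExponent.
End IntMultiples.

(** * Star products in a brace *)

Section Brace.
Variables (A : zmodType) (mul : A -> A -> A) (one : A) (inv : A -> A).
Hypothesis brace : is_brace mul one inv.
Local Notation st := (bstar mul).
Local Notation Zc := (star_center mul).
Local Notation Z2 := (star_center2 mul).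
Implicit Types (a b c u v w x y z : A) (k : int).

Lemma bmulDr a b c : mul a (b + c) = mul a b + mul a c - a.
Proof. by case: brace. Qed.

Lemma bmulr0 a : mul a 0 = a.
Proof.
have /eqP := bmulDr a 0 0; rewrite addr0 eq_sym subr_eq => /eqP.
exact: addrI.
Qed.

Lemma bone0 : one = 0.
Proof. by case: brace => _ mul1r _ _ _; rewrite -(bmulr0 one) mul1r. Qed.

Lemma bmul0r a : mul 0 a = a.
Proof. by case: brace => _ mul1r _ _ _; rewrite -bone0 mul1r. Qed.

Lemma bmulVr a : mul (inv a) a = 0.
Proof. by case: brace => _ _ _ mulV _; rewrite -bone0; case: (mulV a). Qed.

Lemma bmulrV a : mul a (inv a) = 0.
Proof. by case: brace => _ _ _ mulV _; rewrite -bone0; case: (mulV a). Qed.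

Lemma bmulE x y : mul x y = x + y + st x y.
Proof. by rewrite /bstar -[mul x y - x - y]addrA -opprD [RHS]addrC subrK. Qed.

Lemma bstarDr x y z : st x (y + z) = st x y + st x z.
Proof.
rewrite /bstar bmulDr opprD [RHS]addrACA.
by rewrite [X in _ = X + _]addrACA -[in RHS](addrA (mul x y + mul x z)) !addrA.
Qed.

Lemma bstarBr x y z : st x (y - z) = st x y - st x z.
Proof. by rewrite -[in RHS](subrK z y) [in RHS]bstarDr addrK. Qed.

Lemma bstarr0 x : st x 0 = 0.
Proof. by have := bstarBr x 0 0; rewrite subr0 subrr. Qed.

Lemma bstar0r x : st 0 x = 0.
Proof. by rewrite /bstar bmul0r subr0 subrr. Qed.

Lemma bstarNr x y : st x (- y) = - st x y.
Proof. by rewrite -sub0r bstarBr bstarr0 sub0r. Qed.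

Lemma bstarMzr x y k : st x (y *~ k) = st x y *~ k.
Proof.
by apply: (@mulrz_morph_in _ _ xpredT) => // ? ? _ _; apply: bstarBr.
Qed.

Lemma bstarMl u y x : st (mul u y) x = st u x + st u (st y x) + st y x.
Proof.
have e1 : mul (mul u y) x = u + y + st u y + x + st (mul u y) x.
  by rewrite bmulE [mul u y]bmulE.
have e2 : mul u (mul y x) =
    u + (y + x + st y x) + (st u y + st u x + st u (st y x)).
  by rewrite bmulE [mul y x]bmulE !bstarDr.
apply: (addrI (u + y + st u y + x)).
have bmulA : associative mul by case: brace.
rewrite -e1 -bmulA e2.
set s1 := st u (st y x); set s2 := st u x; set s3 := st u y; set s4 := st y x.
by clearbody s1 s2 s3 s4; rewrite !addrA [LHS](ACl (1*2*5*3*6*7*4)).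
Qed.

Lemma star_center0 : Zc 0.
Proof. by move=> x; rewrite bstar0r bstarr0. Qed.

Lemma bstar_addl_center y w x : Zc w -> st (y + w) x = st y x.
Proof.
move=> Zw.
have -> : y + w = mul y w by rewrite bmulE (proj2 (Zw y)) addr0.
by rewrite bstarMl (proj1 (Zw x)) bstarr0 !addr0.
Qed.

Lemma bstar_addr_center x y w : Zc w -> st x (y + w) = st x y.
Proof. by move=> Zw; rewrite bstarDr (proj2 (Zw x)) addr0. Qed.

Lemma star_centerN z : Zc z -> Zc (- z).
Proof.
move=> Zz x; rewrite bstarNr (proj2 (Zz x)) oppr0.
by rewrite -(bstar_addl_center _ _ Zz) addNr bstar0r.
Qed.

Lemma star_centerB z z' : Zc z -> Zc z' -> Zc (z - z').
Proof.
move=> Zz Zz' x; rewrite bstar_addl_center ?bstarBr; last exact: star_centerN.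
by rewrite (proj1 (Zz x)) (proj2 (Zz x)) (proj2 (Zz' x)) subrr.
Qed.

Lemma star_centerD z z' : Zc z -> Zc z' -> Zc (z + z').
Proof. by move=> Zz Zz'; rewrite -[z']opprK; apply/star_centerB/star_centerN. Qed.

Lemma star_centerMz z k : Zc z -> Zc (z *~ k).
Proof. exact: mulrz_closed star_center0 star_centerB z k. Qed.

Lemma star_center_center2 z : Zc z -> Z2 z.
Proof.
by move=> Zz x; rewrite (proj1 (Zz x)) (proj2 (Zz x)); split; apply: star_center0.
Qed.

Lemma binvE c : Zc (st c (inv c)) -> inv c = - c + st c c.
Proof.
move=> Zw; set w := st c (inv c).
have invE : inv c = - c - w.
  have cinvw0 : c + inv c + w = 0 by rewrite -(bmulrV c) bmulE.
  by rewrite -[inv c](addKr c) -(addrK w (c + inv c)) cinvw0 sub0r.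
rewrite [in LHS]invE; congr (_ + _).
by rewrite {1}/w invE bstarBr bstarNr (proj2 (Zw c)) subr0 opprK.
Qed.

Lemma bstarNl c x : Z2 c -> st (- c) x = - st c x.
Proof.
move=> Z2c.
have -> : - c = inv c - st c c.
  by rewrite binvE ?addrK //; exact: (proj1 (Z2c (inv c))).
rewrite bstar_addl_center; last exact/star_centerN/(proj1 (Z2c c)).
have := bstarMl (inv c) c x.
rewrite bmulVr bstar0r (proj2 (proj1 (Z2c x) (inv c))) addr0.
by move/eqP; rewrite eq_sym addr_eq0 => /eqP.
Qed.

Lemma star_center2N c : Z2 c -> Z2 (- c).
Proof.
move=> Z2c x; rewrite bstarNl // bstarNr.
by split; apply: star_centerN; case: (Z2c x).
Qed.

Lemma bstarDl u v x : Z2 u -> Z2 v -> st (u + v) x = st u x + st v x.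
Proof.
move=> Z2u Z2v; have -> : u + v = mul u v - st u v by rewrite bmulE addrK.
rewrite bstar_addl_center; last exact/star_centerN/(proj1 (Z2u v)).
by rewrite bstarMl (proj2 (proj1 (Z2v x) u)) addr0.
Qed.

Lemma star_center2D u v : Z2 u -> Z2 v -> Z2 (u + v).
Proof.
move=> Z2u Z2v x; rewrite bstarDl // bstarDr.
by split; apply: star_centerD;
  [case: (Z2u x) | case: (Z2v x) | case: (Z2u x) | case: (Z2v x)].
Qed.

Lemma bstarBl u v x : Z2 u -> Z2 v -> st (u - v) x = st u x - st v x.
Proof.
by move=> Z2u Z2v; rewrite bstarDl ?bstarNl //; apply: star_center2N.
Qed.

Lemma star_center2B u v : Z2 u -> Z2 v -> Z2 (u - v).
Proof. by move=> Z2u Z2v; apply/star_center2D/star_center2N. Qed.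

Lemma star_center2Mz c k : Z2 c -> Z2 (c *~ k).
Proof.
apply: mulrz_closed; last exact: star_center2B.
exact: star_center_center2 star_center0.
Qed.

Lemma bstarMzl c x k : Z2 c -> st (c *~ k) x = st c x *~ k.
Proof.
apply: (mulrz_morph_in (f := st^~ x)); last by move=> *; apply: bstarBl.
  exact: star_center_center2 star_center0.
exact: star_center2B.
Qed.

Lemma bstar_cyc_plus c x y : Z2 c ->
  cyc_plus c Zc x -> cyc_plus c Zc y -> cyc (st c c) (st x y).
Proof.
move=> Z2c [k [w [Zw ->]]] [k' [w' [Zw' ->]]].
rewrite bstar_addl_center // bstarMzl // bstar_addr_center // bstarMzr.
exact/cyc_mulrz/cyc_mulrz/cyc_refl.
Qed.

Lemma subbrace_cyc_plus c (W : A -> Prop) : Z2 c ->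
  W 0 -> (forall x y, W x -> W y -> W (x - y)) -> (forall w, W w -> Zc w) ->
  W (st c c) -> subbrace mul one inv (cyc_plus c W).
Proof.
move=> Z2c W0 WB WZ Wcc.
have WN w : W w -> W (- w) by move=> Ww; rewrite -sub0r; apply: WB.
have WD w w' : W w -> W w' -> W (w + w').
  by move=> Ww Ww'; rewrite -[w']opprK; apply/WB/WN.
have Wst x y : cyc_plus c W x -> cyc_plus c W y -> W (st x y).
  move=> /(cyc_plusS WZ) Jx /(cyc_plusS WZ) Jy.
  by have [k ->] := bstar_cyc_plus Z2c Jx Jy; apply: mulrz_closed.
have Z2W y : cyc_plus c W y -> Z2 y.
  move=> [k [w [Ww ->]]]; apply: star_center2D; first exact: star_center2Mz.
  exact/star_center_center2/WZ.
split; first exact: cyc_plus_id.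
- move=> _ _ [k [w [Ww ->]]] [k' [w' [Ww' ->]]].
  by exists (k - k'), (w - w'); rewrite mulrzBr opprD addrACA; split; first exact: WB.
- by rewrite bone0; apply: cyc_plus_id.
- move=> x y Wx Wy; have Wxy := Wst x y Wx Wy.
  move: Wx Wy => [k [w [Ww xE]]] [k' [w' [Ww' yE]]].
  exists (k + k'), (w + w' + st x y); split; first by apply/WD/Wxy/WD.
  rewrite bmulE {1}xE {1}yE mulrzDr; move: (st x y) => s.
  by rewrite addrACA [RHS]addrA.
- move=> x Wx; rewrite binvE; last by case: (Z2W x Wx (inv x)).
  have Wxx := Wst x x Wx Wx; move: Wx => [k [w [Ww xE]]].
  exists (- k), (- w + st x x); split; first exact/WD/Wxx/WN.
  by rewrite {1}xE opprD mulrNz; move: (st x x) => s; rewrite addrA.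
Qed.

(** * Star products with elements of zeta_2 in a T-brace *)

Hypothesis Tbrace : T_brace mul one inv.

(* [<c> + <c * c>] is an ideal of [<c> + zeta(star, A)], which is an ideal of [A]. *)
Lemma T_brace_bstar_cyc_plus c x : Z2 c ->
  cyc_plus c (cyc (st c c)) (st x c) /\ cyc_plus c (cyc (st c c)) (st c x).
Proof.
move=> Z2c; set q := st c c.
have Zq : Zc q by case: (Z2c c).
have cycqZ w : cyc q w -> Zc w by move=> [k ->]; apply: star_centerMz.
have J_subbrace : subbrace mul one inv (cyc_plus c Zc).
  exact: subbrace_cyc_plus Z2c star_center0 star_centerB (fun w Zw => Zw) Zq.
have I_subbrace : subbrace mul one inv (cyc_plus c (cyc q)).
  apply: subbrace_cyc_plus => //; last exact: cyc_refl.
    by exists 0; rewrite mulr0z.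
  exact: cycB.
have I_ideal_J : ideal_of mul one inv (cyc_plus c Zc) (cyc_plus c (cyc q)).
  split=> // [y|a z Ja Iz]; first exact: cyc_plusS.
  have Jz := cyc_plusS cycqZ Iz.
  by split; apply: cyc_plus_id; apply: bstar_cyc_plus.
have J_ideal : ideal mul one inv (cyc_plus c Zc).
  split=> // a _ _ [k [w [Zw ->]]]; split; apply: cyc_plus_id.
    by rewrite bstar_addr_center // bstarMzr; apply: star_centerMz; case: (Z2c a).
  by rewrite bstar_addl_center // bstarMzl //; apply: star_centerMz; case: (Z2c a).
have [_ _ I_ideal] := Tbrace J_subbrace I_ideal_J J_ideal.
have Ic : cyc_plus c (cyc q) c.
  by exists 1, 0; split; [exists 0; rewrite mulr0z | rewrite mulr1z addr0].
by have [] := I_ideal x c I Ic.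
Qed.

Definition stars_cyc_square c :=
  forall x, cyc (st c c) (st x c) /\ cyc (st c c) (st c x).

Definition cyc_center_trivial c := forall k, Zc (c *~ k) -> c *~ k = 0.

Lemma cyc_center_nontrivial c :
  ~ cyc_center_trivial c -> exists2 n, n != 0 & Zc (c *~ n).
Proof.
move=> c_nontriv; apply: NNPP => no_n; apply: c_nontriv => k Zck.
apply: NNPP => ck_neq0; apply: no_n; exists k => //.
by apply: contra_notN ck_neq0 => /eqP ->; rewrite mulr0z.
Qed.

Lemma stars_cyc_square_center_trivial c :
  Z2 c -> cyc_center_trivial c -> stars_cyc_square c.
Proof.
move=> Z2c c_triv x.
have key y k m : Zc y -> y = c *~ k + st c c *~ m -> cyc (st c c) y.
  move=> Zy yE; exists m; rewrite yE c_triv ?add0r //.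
  have -> : c *~ k = y - st c c *~ m by rewrite yE addrK.
  by apply: star_centerB => //; apply: star_centerMz; case: (Z2c c).
have [[k [_ [[m ->] E]]] [k' [_ [[m' ->] E']]]] := T_brace_bstar_cyc_plus x Z2c.
by split; [apply: key E; case: (Z2c x) | apply: key E'; case: (Z2c x)].
Qed.

Variable p : nat.
Hypothesis p_prime : prime p.
Hypothesis center_torsion_p :
  forall z, Zc z -> add_torsion z -> exists k : nat, z *+ (p ^ k) = 0.

Lemma bstar_square_prime_exponent_of_mulrz c :
  Z2 c -> stars_cyc_square (c *~ p) -> st c c *+ p = 0.
Proof.
move=> Z2c Scp; set z := st c c *~ p.
have Zz : Zc z by apply: star_centerMz; case: (Z2c c).
have [m Em] := proj1 (Scp c).
have czE : st c (c *~ p) = z by rewrite bstarMzr.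
(* [z] is killed by [1 - p m], hence by some [p ^ k], and [z = (p m) ^ k z]. *)
have zE : z = z *~ (p%:Z * m) by rewrite mulrzA -czE -bstarMzl // -Em.
have pm_neq1 : 1 - p%:Z * m != 0.
  rewrite subr_eq0 eq_sym; apply/negP => /eqP/(congr1 absz); rewrite abszM /=.
  move/eqP; rewrite muln_eq1 => /andP[/eqP p1 _].
  by move: (prime_gt1 p_prime); rewrite p1.
have [k zpk0] : exists k : nat, z *+ (p ^ k) = 0.
  apply: center_torsion_p Zz (mulrz_eq0_add_torsion _ pm_neq1).
  by rewrite mulrzBr mulr1z -zE subrr.
have zE' j : z = z *~ ((p%:Z * m) ^+ j).
  by elim: j => [|j IHj]; rewrite ?expr0 ?mulr1z // exprSr mulrzA -IHj.
rewrite pmulrn -/z (zE' k) exprMn mulrzA -[p%:Z]natz -natrX natz -pmulrn.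
by rewrite zpk0 mul0rz.
Qed.

Lemma stars_cyc_square_center_nontorsion c e n :
  Z2 c -> n != 0 -> Zc (c *~ n) -> Zc e -> ~ add_torsion e -> stars_cyc_square c.
Proof.
move=> Z2c n_neq0 Zcn Ze e_nt x.
have qn0 : st c c *~ n = 0 by rewrite -bstarMzr; case: (Zcn c).
have shift f : Zc f ->
    cyc_plus (c + f) (cyc (st c c)) (st x c) /\
    cyc_plus (c + f) (cyc (st c c)) (st c x).
  move=> Zf; have Z2cf := star_center2D Z2c (star_center_center2 Zf).
  have := T_brace_bstar_cyc_plus x Z2cf.
  by rewrite !bstar_addr_center // !bstar_addl_center.
have [E1 E1'] := shift e Ze; have [E2 E2'] := shift _ (star_centerMz 2 Ze).
split.
- apply: (cyc_plus_shift_nontorsion e_nt n_neq0 _ qn0 E1 E2).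
  by rewrite -bstarMzr; case: (Zcn x).
- apply: (cyc_plus_shift_nontorsion e_nt n_neq0 _ qn0 E1' E2').
  by rewrite -bstarMzl //; case: (Zcn x).
Qed.

(* [c + d p] has the same star products as [c] because [d * d] has order [p],
   and [<c + d p>] meets the center trivially because [d] is not torsion. *)
Lemma stars_cyc_square_shift c d n : Z2 c -> n != 0 -> Zc (c *~ n) ->
  Z2 d -> ~ add_torsion d -> cyc_center_trivial d -> stars_cyc_square c.
Proof.
move=> Z2c n_neq0 Zcn Z2d d_nt d_triv.
have p_neq0 : p%:Z != 0 by rewrite eqz_nat -lt0n prime_gt0.
have Sd := stars_cyc_square_center_trivial Z2d d_triv.
have Z2dp := star_center2Mz p Z2d.
have ddp0 : st d d *+ p = 0.
  apply: bstar_square_prime_exponent_of_mulrz Z2d _.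
  apply: stars_cyc_square_center_trivial Z2dp _ => k.
  by rewrite -mulrzA; apply: d_triv.
set c' := c + d *~ p.
have c'_triv : cyc_center_trivial c'.
  move=> k Zc'k.
  have dE : d *~ (p%:Z * k * n) = c' *~ k *~ n - c *~ n *~ k.
    rewrite /c' !mulrzDl -!mulrzA [k * n]mulrC addrC addKr -mulrA [n * k]mulrC.
    by rewrite mulrA.
  have /d_triv/eqP : Zc (d *~ (p%:Z * k * n)).
    by rewrite dE; apply: star_centerB; apply: star_centerMz.
  rewrite nontorsion_mulrz_eq0 // !mulf_eq0 (negbTE p_neq0) (negbTE n_neq0) orbF.
  by move=> /eqP ->; rewrite mulr0z.
have Sc' := stars_cyc_square_center_trivial (star_center2D Z2c Z2dp) c'_triv.
have c'r x : st x c' = st x c.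
  by rewrite bstarDr bstarMzr (cyc_prime_exponent_mulrz ddp0 (proj1 (Sd x))) addr0.
have c'l x : st c' x = st c x.
  rewrite bstarDl // bstarMzl //.
  by rewrite (cyc_prime_exponent_mulrz ddp0 (proj2 (Sd x))) addr0.
by move=> x; have := Sc' x; rewrite !c'l !c'r.
Qed.

Variable d : A.
Hypotheses (Z2d : Z2 d) (d_nt : ~ add_torsion d).

Lemma stars_cyc_square_center2 c : Z2 c -> stars_cyc_square c.
Proof.
move=> Z2c.
have [c_triv|/cyc_center_nontrivial [n n_neq0 Zcn]] := classic (cyc_center_trivial c).
  exact: stars_cyc_square_center_trivial.
have [d_triv|/cyc_center_nontrivial [n' n'_neq0 Zdn']] :=
  classic (cyc_center_trivial d).
  exact: stars_cyc_square_shift Z2c n_neq0 Zcn Z2d d_nt d_triv.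
have dn'_nt := nontorsion_mulrz d_nt n'_neq0.
exact: stars_cyc_square_center_nontorsion Z2c n_neq0 Zcn Zdn' dn'_nt.
Qed.

Lemma bstar_square_prime_exponent c : Z2 c -> st c c *+ p = 0.
Proof.
move=> Z2c; apply: (bstar_square_prime_exponent_of_mulrz Z2c).
exact: stars_cyc_square_center2 (star_center2Mz _ Z2c).
Qed.

(* A nonzero [a * b] or [b * a] generates [<b * b>] inside [<a * a>]; otherwise
   [a * a = a * (a + b)] generates [<(a + b) * (a + b)> = <a * a + b * b>]. *)
Lemma cyc_bstar_square a b : Z2 a -> Z2 b -> st a a <> 0 -> cyc (st a a) (st b b).
Proof.
move=> Z2a Z2b aa_neq0.
have [Sa Sb] := (stars_cyc_square_center2 Z2a, stars_cyc_square_center2 Z2b).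
have bbp0 := bstar_square_prime_exponent Z2b.
have [ab0|/eqP ab_neq0] := eqVneq (st a b) 0; last first.
  exact: (cyc_prime_exponent p_prime bbp0 (proj2 (Sa b)) (proj1 (Sb a)) ab_neq0).
have [ba0|/eqP ba_neq0] := eqVneq (st b a) 0; last first.
  exact: (cyc_prime_exponent p_prime bbp0 (proj1 (Sa b)) (proj2 (Sb a)) ba_neq0).
have Z2ab := star_center2D Z2a Z2b.
have ababE : st (a + b) (a + b) = st a a + st b b.
  by rewrite bstarDl // !bstarDr ab0 ba0 addr0 add0r.
have /cycB /(_ (cyc_refl (st a a))) : cyc (st a a) (st a a + st b b).
  apply: (cyc_prime_exponent p_prime _ (cyc_refl _) _ aa_neq0).
    by rewrite -ababE; apply: bstar_square_prime_exponent.
  have a_abE : st a (a + b) = st a a by rewrite bstarDr ab0 addr0.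
  by rewrite -ababE -a_abE; case: (stars_cyc_square_center2 Z2ab a).
by rewrite [_ + st b b]addrC addrK.
Qed.

End Brace.

Theorem lemma4p7 (A : zmodType) (mul : A -> A -> A) (one : A)
    (inv : A -> A) (p : nat) :
  is_brace mul one inv ->
  T_brace mul one inv ->
  prime p ->
  (* the torsion subgroup of (zeta(star,A),+) is a p-group *)
  (forall z, star_center mul z -> add_torsion z ->
     exists k : nat, z *+ (p ^ k) = 0) ->
  (* the additive group of zeta_2(star,A) is not periodic *)
  (exists a, star_center2 mul a /\ ~ add_torsion a) ->
  forall a b : A, star_center2 mul a -> star_center2 mul b ->
  bstar mul a a <> 0 -> bstar mul b b <> 0 ->
  (exists y, y <> 0 /\ cyc (bstar mul a a) y /\ cyc (bstar mul b b) y) /\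
  (forall y, cyc (bstar mul a a) y <-> cyc (bstar mul b b) y).
Proof.
move=> brace Tbrace p_prime center_torsion_p [d [Z2d d_nt]] a b Z2a Z2b.
move=> aa_neq0 bb_neq0.
have cyc_sq := cyc_bstar_square brace Tbrace p_prime center_torsion_p Z2d d_nt.
have ab := cyc_sq a b Z2a Z2b aa_neq0; have ba := cyc_sq b a Z2b Z2a bb_neq0.
split; first by exists (bstar mul a a); do !split=> //; apply: cyc_refl.
by move=> y; split; apply: cyc_trans.
Qed.
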